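(* Let $G$ be a graph with no isolated vertices and let $\{u_1,\dots,u_k\}$, $k\ge4$, be a clique of $G$ such that $G-\{u_1,\dots,u_k\}$ has no isolated vertices. Then $b_{tR}(G)\le \sum_{i=1}^k \deg(u_i)-\frac{k(k+1)}{2}$.
   Context: A TRDF on $G=(V,E)$ is a function $f:V\to\{0,1,2\}$ such that every $v$ with $f(v)=0$ has a neighbor $u$ with $f(u)=2$ and the subgraph induced by $\{v:f(v)>0\}$ has no isolated vertices; $\gamma_{tR}(G)$ is its minimum weight. $b_{tR}(G)$ is the minimum $|E'|$ such that $G-E'$ has no isolated vertices and $\gamma_{tR}(G-E')>\gamma_{tR}(G)$ ($\infty$ if none). A clique is a set of pairwise adjacent vertices. *)

From mathcomp Require Import all_boot.
Set Implicit Arguments. Unset Strict Implicit. Unset Printing Implicit Defensive.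

Section Graphs.
Variable T : finType.

Definition simple_graph (g : rel T) : Prop := symmetric g /\ irreflexive g.

Definition edgeset (g : rel T) : {set {set T}} :=
  [set e : {set T} | [exists x, exists y, g x y && (e == [set x; y])]].

Definition del_edges (g : rel T) (E : {set {set T}}) : rel T :=
  fun x y => g x y && ([set x; y] \notin E).

Definition no_isolated (g : rel T) : bool := [forall v, exists w, g v w].

Definition deg (g : rel T) (v : T) : nat := #|[set w | g v w]|.

Definition trdf (g : rel T) (f : {ffun T -> 'I_3}) : bool :=
  [forall v, (val (f v) == 0) ==> [exists u, g v u && (val (f u) == 2)]] &&
  [forall v, (0 < val (f v)) ==> [exists w, (0 < val (f w)) && g v w]].

Definition weight (f : {ffun T -> 'I_3}) : nat := \sum_v val (f v).

(* minimum weight of a TRDF; the default 2*#|T| (weight of the constant-2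
   function) is never smaller than the true minimum when a TRDF exists *)
Definition gamma_tR (g : rel T) : nat :=
  \big[minn/(2 * #|T|)]_(f : {ffun T -> 'I_3} | trdf g f) weight f.

Definition bondage_set (g : rel T) (E : {set {set T}}) : bool :=
  [&& E \subset edgeset g, no_isolated (del_edges g E) &
      gamma_tR g < gamma_tR (del_edges g E)].

(* b_tR(G) : None stands for infinity *)
Definition b_tR (g : rel T) : option nat :=
  if [exists E, bondage_set g E] then
    Some (\big[minn/#|edgeset g|]_(E : {set {set T}} | bondage_set g E) #|E|)
  else None.

Definition is_clique (g : rel T) (K : {set T}) : Prop :=
  forall x y, x \in K -> y \in K -> x != y -> g x y.

Definition no_isolated_outside (g : rel T) (K : {set T}) : Prop :=
  forall v, v \notin K -> exists w, w \notin K /\ g v w.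

End Graphs.

(* Number the clique [u_0, ..., u_(k-1)] and delete every edge with an end in the clique,
   except the edges of the Hamiltonian cycle [u_0 u_1 ... u_(k-1) u_0]; there are
   [sum deg u_i - k (k - 1) / 2 - k] of them.  Afterwards the clique is a component [C_k],
   [k >= 4], on which any TRDF weighs at least 4, whereas in [G] a TRDF may weigh only 3 on
   the clique (2 and 1 on two of its vertices, 0 elsewhere) and agree with the old one
   elsewhere.  Hence the total Roman domination number strictly increases. *)
From mathcomp Require Import all_boot zify.
Set Implicit Arguments. Unset Strict Implicit. Unset Printing Implicit Defensive.

Lemma ordS_val n (i : 'I_n) : val (ordS i) = if i.+1 == n then 0 else i.+1.
Proof.
rewrite /ordS /=; case: eqP => [->|ne]; first by rewrite modnn.
by rewrite modn_small // ltn_neqAle ltn_ord andbT; apply/eqP.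
Qed.

Lemma ordS_neq n (i : 'I_n) : 1 < n -> ordS i != i.
Proof.
move=> n_gt1; apply/eqP => /(congr1 val); rewrite ordS_val.
have := ltn_ord i; case: eqP => /=; lia.
Qed.

Lemma ordS2_neq n (i : 'I_n) : 2 < n -> ordS (ordS i) != i.
Proof.
move=> n_gt2; apply/eqP => /(congr1 val); rewrite !ordS_val.
by have := ltn_ord i; do 2 case: eqP => /=; lia.
Qed.

Definition cycle_adj n (i j : 'I_n) := (j == ordS i) || (i == ordS j).

Lemma cycle_adjC n (i j : 'I_n) : cycle_adj i j = cycle_adj j i.
Proof. by rewrite /cycle_adj orbC. Qed.

Lemma cycle_adj_neq n (i j : 'I_n) : 1 < n -> cycle_adj i j -> i != j.
Proof.
by move=> n_gt1 /orP [] /eqP ->; rewrite ?ordS_neq // eq_sym ordS_neq.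
Qed.

Lemma card_offdiag n : #|[set p : 'I_n * 'I_n | p.1 != p.2]| + n = n * n.
Proof.
have -> : [set p : 'I_n * 'I_n | p.1 != p.2] = ~: [set (i, i) | i : 'I_n].
  apply/setP => -[a b]; rewrite !inE /=; apply/idP/idP.
    by move=> ab; apply/imsetP => -[c _ [ea eb]]; rewrite ea eb eqxx in ab.
  by move=> nd; apply/eqP => ab; case/imsetP: nd; exists a; rewrite // ab.
have card_diag : #|[set (i, i) | i : 'I_n]| = n.
  by rewrite card_imset ?card_ord // => a b [].
by rewrite -[X in _ + X = _]card_diag addnC cardsC card_prod card_ord.
Qed.

Lemma card_cycle_adj n : 2 < n -> 2 * n <= #|[set p : 'I_n * 'I_n | cycle_adj p.1 p.2]|.
Proof.
move=> n_gt2.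
set S1 := [set (i, ordS i) | i : 'I_n]; set S2 := [set (ordS i, i) | i : 'I_n].
have card_S1 : #|S1| = n by rewrite card_imset ?card_ord // => a b [].
have card_S2 : #|S2| = n by rewrite card_imset ?card_ord // => a b [].
have S12_disj : S1 :&: S2 = set0.
  apply/setP => p; rewrite !inE; apply/negP.
  case/andP => /imsetP [a _ ->] /imsetP [b _ [ea eb]].
  by move: (ordS2_neq b n_gt2); rewrite -ea eb eqxx.
have S12_sub : S1 :|: S2 \subset [set p : 'I_n * 'I_n | cycle_adj p.1 p.2].
  by apply/subsetP => p; rewrite !inE => /orP [] /imsetP [a _ ->];
    rewrite /cycle_adj eqxx ?orbT.
apply: leq_trans (subset_leq_card S12_sub).
by have := cardsUI S1 S2; rewrite S12_disj cards0 card_S1 card_S2; lia.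
Qed.

(* One pair per unordered pair of indices, plus the [n] reversed cycle arcs. *)
Definition cycle_or_lt_pairs n :=
  [set p : 'I_n * 'I_n | (p.1 != p.2) && (cycle_adj p.1 p.2 || (p.1 < p.2))].

Lemma card_cycle_or_lt_pairs n : 2 < n -> n * n.+1 <= 2 * #|cycle_or_lt_pairs n|.
Proof.
move=> n_gt2.
set C := cycle_or_lt_pairs n.
set C' := [set (p.2, p.1) | p in C].
have card_C' : #|C'| = #|C| by apply: card_imset => -[a b] [c d] [-> ->].
have C'E : C' = [set p : 'I_n * 'I_n | (p.1 != p.2) && (cycle_adj p.1 p.2 || (p.2 < p.1))].
  apply/setP => -[a b]; rewrite inE /=; apply/imsetP/idP => [[[c d]]|h].
    by rewrite inE /= => cd [-> ->]; rewrite eq_sym cycle_adjC.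
  by exists (b, a); rewrite // inE /= eq_sym cycle_adjC.
have offdiag_sub : [set p : 'I_n * 'I_n | p.1 != p.2] \subset C :|: C'.
  apply/subsetP => -[a b]; rewrite C'E !inE /= => ab; rewrite ab /=.
  have [lt|lt|eq_ab] := ltngtP a b; rewrite ?lt ?orbT //.
  by rewrite (val_inj eq_ab) eqxx in ab.
have cycle_sub : [set p : 'I_n * 'I_n | cycle_adj p.1 p.2] \subset C :&: C'.
  apply/subsetP => -[a b]; rewrite C'E !inE /= => ab; rewrite ab /= andbb andbT.
  by apply: cycle_adj_neq ab; lia.
have := cardsUI C C'; rewrite card_C' => CUI.
have := subset_leq_card offdiag_sub; have := subset_leq_card cycle_sub.
have := card_offdiag n; have := card_cycle_adj n_gt2; lia.
Qed.

Lemma bigmin_le (I : finType) (P : pred I) (F : I -> nat) d j :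
  P j -> \big[minn/d]_(i | P i) F i <= F j.
Proof.
move=> Pj; elim: (index_enum I) (mem_index_enum j) => // i s IH.
rewrite inE big_cons => /orP [/eqP <-|js]; first by rewrite Pj geq_minl.
by case: ifP => _; [apply: leq_trans (geq_minr _ _) (IH js) | apply: IH].
Qed.

Lemma leq_sum2_in (T : finType) (K : {set T}) (F : T -> nat) a b :
  a \in K -> b \in K -> a != b -> F a + F b <= \sum_(x in K) F x.
Proof.
move=> aK bK ab; rewrite (bigD1 a) //= (bigD1 b) /=; last by rewrite bK eq_sym.
by rewrite addnA leq_addr.
Qed.

Lemma leq_sum3_in (T : finType) (K : {set T}) (F : T -> nat) a b c :
  a \in K -> b \in K -> c \in K -> a != b -> a != c -> b != c ->
  F a + F b + F c <= \sum_(x in K) F x.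
Proof.
move=> aK bK cK ab ac bc; rewrite (bigD1 a) //= (bigD1 b) /=; last by rewrite bK eq_sym.
rewrite (bigD1 c) /=; last by rewrite cK eq_sym ac eq_sym bc.
by rewrite !addnA leq_addr.
Qed.

Lemma card_set_pair (I J : finType) (P : I -> J -> bool) :
  #|[set p : I * J | P p.1 p.2]| = \sum_i #|[set j | P i j]|.
Proof.
rewrite -sum1_card (eq_bigl (fun p : I * J => true && P p.1 p.2)) => [|p]; last by rewrite inE.
rewrite -(pair_big_dep xpredT P (fun _ _ => 1)) /=.
by apply: eq_bigr => i _; rewrite -sum1_card; apply: eq_bigl => j; rewrite inE.
Qed.

Lemma sum_deg_in (T : finType) (g : rel T) (K : {set T}) :
  \sum_(u in K) deg g u = #|[set p : T * T | (p.1 \in K) && g p.1 p.2]|.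
Proof.
rewrite (card_set_pair (fun u w => (u \in K) && g u w)) big_mkcond /=.
apply: eq_bigr => u _; case: ifP => uK; first by apply: eq_card => w; rewrite !inE.
by apply/esym/eqP; rewrite cards_eq0; apply/eqP/setP => w; rewrite !inE.
Qed.

Section TotalRoman.
Variable T : finType.
Implicit Types (g h : rel T) (f : {ffun T -> 'I_3}).

Lemma gamma_tR_le g f : trdf g f -> gamma_tR g <= weight f.
Proof. exact: bigmin_le. Qed.

Lemma trdf_const2 g : no_isolated g -> trdf g [ffun=> Ordinal (isT : 2 < 3)].
Proof.
move=> /forallP noi; apply/andP; split; apply/forallP => v; rewrite ffunE //.
by apply/implyP => _; have /existsP [w gvw] := noi v; apply/existsP; exists w; rewrite ffunE.
Qed.

Lemma gamma_tR_lt g h : no_isolated h ->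
  (forall f, trdf h f -> gamma_tR g < weight f) -> gamma_tR g < gamma_tR h.
Proof.
move=> noi lt_w; rewrite [X in _ < X]/gamma_tR.
apply: (big_ind (fun m => gamma_tR g < m)) => // [|a b lt_a lt_b]; last by rewrite leq_min lt_a.
have := lt_w _ (trdf_const2 noi); rewrite /weight (eq_bigr (fun _ => 2)) => [|v _].
  by rewrite sum_nat_const mulnC.
by rewrite ffunE.
Qed.

Lemma b_tR_le g E : bondage_set g E -> exists2 m, b_tR g = Some m & m <= #|E|.
Proof.
move=> bE; rewrite /b_tR; have -> : [exists E0, bondage_set g E0] by apply/existsP; exists E.
by eexists; [reflexivity | exact: bigmin_le].
Qed.

Lemma trdf_clique_lift g h (K : {set T}) u1 u2 f :
  is_clique g K -> u1 \in K -> u2 \in K -> u1 != u2 ->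
  (forall x y, x \notin K -> h x y -> (y \notin K) && g x y) -> trdf h f ->
  exists2 f' : {ffun T -> 'I_3}, trdf g f' & weight f' = 3 + \sum_(x | x \notin K) val (f x).
Proof.
move=> gK u1K u2K u12 out_edges /andP [/forallP f_dom /forallP f_tot].
have u21 : u2 != u1 by rewrite eq_sym.
pose f' := [ffun x => if x \in K then
  (if x == u1 then Ordinal (isT : 2 < 3) else if x == u2 then Ordinal (isT : 1 < 3)
   else Ordinal (isT : 0 < 3)) else f x].
exists f'.
  apply/andP; split; apply/forallP => v; apply/implyP; rewrite ffunE; case: ifP => vK.
  - case: (eqVneq v u1) => [//|vu1]; case: (eqVneq v u2) => [//|vu2] _.
    by apply/existsP; exists u1; rewrite ffunE u1K eqxx gK.
  - move=> fv0; have /existsP [u /andP [hvu fu]] := implyP (f_dom v) fv0.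
    case/andP: (out_edges v u (negbT vK) hvu) => uK gvu.
    by apply/existsP; exists u; rewrite gvu ffunE (negbTE uK) fu.
  - case: (eqVneq v u1) => [-> _|vu1].
      by apply/existsP; exists u2; rewrite ffunE u2K (negbTE u21) eqxx gK.
    by case: (eqVneq v u2) => // _ _; apply/existsP; exists u1; rewrite ffunE u1K eqxx gK.
  - move=> fv; have /existsP [w /andP [fw hvw]] := implyP (f_tot v) fv.
    case/andP: (out_edges v w (negbT vK) hvw) => wK gvw.
    by apply/existsP; exists w; rewrite gvw ffunE (negbTE wK) fw.
rewrite /weight (bigID (mem K)) /=; congr (_ + _).
  rewrite (bigD1 u1) //= (bigD1 u2) /=; last by rewrite u2K u21.
  rewrite big1 => [|x /andP [/andP [xK xu1] xu2]]; last by rewrite ffunE xK (negbTE xu1) (negbTE xu2).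
  by rewrite !ffunE u1K u2K eqxx (negbTE u21) eqxx.
by apply: eq_bigr => x xK; rewrite ffunE (negbTE xK).
Qed.

End TotalRoman.

Lemma set2_eq (T : finType) (a b x y : T) :
  [set a; b] = [set x; y] -> (a = x /\ b = y) \/ (a = y /\ b = x).
Proof.
move=> e.
have /set2P [ax|ay] : a \in [set x; y] by rewrite -e set21.
all: have /set2P [bx|by_] : b \in [set x; y] by rewrite -e set22.
all: subst a b; auto.
  have /set2P yx : y \in [set x; x] by rewrite e set22.
  by left; case: yx => ->.
have /set2P xy : x \in [set y; y] by rewrite e set21.
by left; case: xy => ->.
Qed.

Section CliqueToCycle.
Variables (T : finType) (g : rel T) (K : {set T}) (n : nat).
Variables (r : T -> 'I_n) (ev : 'I_n -> T).
Hypothesis ev_in : forall i, ev i \in K.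
Hypothesis evK : cancel ev r.
Hypothesis rK : {in K, cancel r ev}.
Hypothesis gsym : symmetric g.
Hypothesis girr : irreflexive g.
Hypothesis gK : is_clique g K.
Hypothesis n_gt3 : 3 < n.

Lemma ev_inj : injective ev.
Proof. exact: can_inj evK. Qed.

Lemma r_inj : {in K &, injective r}.
Proof. exact: can_in_inj rK. Qed.

Lemma card_K : #|K| = n.
Proof.
have -> : K = ev @: 'I_n.
  by apply/setP => x; apply/idP/imsetP => [xK|[i _ ->]]; [exists (r x); rewrite ?rK | ].
by rewrite card_imset ?card_ord //; apply: ev_inj.
Qed.

Definition on_cycle x y := [&& x \in K, y \in K & cycle_adj (r x) (r y)].

Lemma on_cycleC x y : on_cycle x y = on_cycle y x.
Proof. by rewrite /on_cycle andbCA cycle_adjC andbA. Qed.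

Lemma on_cycle_edge x y : on_cycle x y -> g x y.
Proof.
case/and3P => xK yK adj; apply: gK => //; apply/eqP => xy.
by move: (cycle_adj_neq (ltnW (ltnW n_gt3)) adj); rewrite xy eqxx.
Qed.

Lemma on_cycle_next x : x \in K -> on_cycle x (ev (ordS (r x))).
Proof. by move=> xK; rewrite /on_cycle xK ev_in evK /cycle_adj eqxx. Qed.

(* Every edge with an end in [K] is deleted, except the cycle edges; each deleted edge [xy]
   is counted once, as the pair [(x, y)] with [x] the end in [K] of larger index. *)
Definition deleted_arcs := [set p : T * T |
  [&& g p.1 p.2, p.1 \in K, ~~ on_cycle p.1 p.2 & (p.2 \notin K) || (r p.2 < r p.1)]].

Definition deleted_edges := [set [set p.1; p.2] | p in deleted_arcs].

Lemma mem_deleted_edges x y : g x y ->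
  ([set x; y] \in deleted_edges) = ~~ ((x \notin K) && (y \notin K) || on_cycle x y).
Proof.
move=> gxy; apply/imsetP/idP => [[[a b]]|].
  rewrite inE /= => /and4P [_ aK not_cyc _] /esym/set2_eq [] [<- <-].
    by rewrite aK /= not_cyc.
  by rewrite aK andbF on_cycleC.
rewrite negb_or => /andP [xy_in_K not_cyc].
have xy : x != y by apply: contraTneq gxy => ->; rewrite girr.
have [xK|xK] := boolP (x \in K); have [yK|yK] := boolP (y \in K);
  rewrite ?xK ?yK // in xy_in_K.
- have rxy : r x != r y by apply: contra_neq xy; apply: r_inj.
  have [lt|lt|eq_r] := ltngtP (r x) (r y); last by rewrite (val_inj eq_r) eqxx in rxy.
    by exists (y, x); rewrite 1?setUC // inE /= gsym gxy yK on_cycleC not_cyc lt orbT.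
  by exists (x, y); rewrite // inE /= gxy xK not_cyc lt orbT.
- by exists (x, y); rewrite // inE /= gxy xK not_cyc yK.
- by exists (y, x); rewrite 1?setUC // inE /= gsym gxy yK on_cycleC not_cyc xK.
Qed.

Lemma del_deleted_edges x y :
  del_edges g deleted_edges x y = g x y && ((x \notin K) && (y \notin K) || on_cycle x y).
Proof. by rewrite /del_edges; case gxy : (g x y) => //=; rewrite mem_deleted_edges ?negbK. Qed.

Lemma deleted_edges_sub : deleted_edges \subset edgeset g.
Proof.
apply/subsetP => e /imsetP [[a b]]; rewrite inE /= => /and4P [gab _ _ _] ->.
by rewrite inE; apply/existsP; exists a; apply/existsP; exists b; rewrite gab eqxx.
Qed.

Lemma no_isolated_del_deleted_edges :
  no_isolated_outside g K -> no_isolated (del_edges g deleted_edges).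
Proof.
move=> noi; apply/forallP => v; apply/existsP; have [vK|vK] := boolP (v \in K).
  have cyc := on_cycle_next vK.
  by exists (ev (ordS (r v))); rewrite del_deleted_edges cyc (on_cycle_edge cyc) orbT.
by have [w [wK gvw]] := noi v vK; exists w; rewrite del_deleted_edges gvw vK wK.
Qed.

Lemma card_deleted_arcs : 2 * #|deleted_arcs| + n * n.+1 <= 2 * \sum_(u in K) deg g u.
Proof.
set P := [set p : T * T | (p.1 \in K) && g p.1 p.2].
have sub_P : deleted_arcs \subset P.
  by apply/subsetP => -[x y]; rewrite !inE /= => /and4P [-> -> _ _].
have kept_arcsE : P :\: deleted_arcs = [set (ev p.1, ev p.2) | p in cycle_or_lt_pairs n].
  apply/setP => -[x y]; rewrite !inE /=; apply/idP/imsetP => [|[[i j]]].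
    case/andP=> kept /andP [xK gxy].
    rewrite gxy xK /= negb_and negbK negb_or negbK -leqNgt in kept.
    have yK : y \in K by case/orP: kept => [/and3P [] | /andP []].
    have xy : x != y by apply: contraTneq gxy => ->; rewrite girr.
    have rxy : r x != r y by apply: contra_neq xy; apply: r_inj.
    exists (r x, r y); last by rewrite /= !rK.
    rewrite inE /= rxy; case/orP: kept => [/and3P [_ _ ->] //| /andP [_ le_xy]].
    by rewrite ltn_neqAle le_xy rxy orbT.
  rewrite inE /= => /andP [ij adj_or_lt] [-> ->].
  have cyc : on_cycle (ev i) (ev j) = cycle_adj i j by rewrite /on_cycle !ev_in !evK.
  rewrite !ev_in !evK cyc gK ?ev_in //=; last by apply: contra_neq ij => /ev_inj.
  by case/orP: adj_or_lt => [-> // | lt_ij]; rewrite ltnNge ltnW ?andbF.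
have kept_arcs : #|P :\: deleted_arcs| = #|cycle_or_lt_pairs n|.
  by rewrite kept_arcsE card_imset // => -[i j] [k l] [/ev_inj -> /ev_inj ->].
rewrite sum_deg_in -(cardsID deleted_arcs P) (setIidPr sub_P) kept_arcs.
by have := card_cycle_or_lt_pairs (ltnW n_gt3); lia.
Qed.

(* A TRDF of a graph in which [K] spans (at most) the cycle [C_n], [n >= 4], weighs at least 4 on
   [K]: a vertex labelled 2 needs a positive cycle neighbour, and a third vertex off its closed
   neighbourhood either is positive or needs another neighbour labelled 2. *)
Lemma trdf_cycle_weight (h : rel T) (f : {ffun T -> 'I_3}) :
  (forall x y, x \in K -> h x y -> on_cycle x y) -> trdf h f -> 4 <= \sum_(x in K) val (f x).
Proof.
move=> h_cyc /andP [/forallP f_dom /forallP f_tot].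
have [/existsP [a /andP [aK /eqP fa]] | no2] := boolP [exists a, (a \in K) && (val (f a) == 2)].
  have /existsP [w /andP [fw haw]] : [exists w, (0 < val (f w)) && h a w].
    by apply: (implyP (f_tot a)); rewrite fa.
  have aw := h_cyc _ _ aK haw; have /and3P [_ wK _] := aw.
  have /subsetPn [j _ j_far] : ~~ ([set: 'I_n] \subset [:: r a; ordS (r a); ord_pred (r a)]).
    apply/negP => /subset_leq_card; rewrite cardsT card_ord => le_n3.
    by have := leq_trans le_n3 (card_size _); rewrite leqNgt n_gt3.
  rewrite !inE !negb_or in j_far; case/and3P: j_far => j_a j_next j_prev.
  have bK := ev_in j.
  have not_ab : ~~ on_cycle a (ev j).
    rewrite /on_cycle aK bK evK /cycle_adj negb_or j_next /=.
    by apply: contra_neq j_prev => ->; rewrite ordSK.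
  have ba : ev j != a by apply: contra_neq j_a => <-; rewrite evK.
  have wb : w != ev j by apply: contraNneq not_ab => <-.
  have aw' : a != w by apply: contraTneq (on_cycle_edge aw) => ->; rewrite girr.
  have [fb0|fb_pos] := posnP (val (f (ev j))).
    have /existsP [c /andP [hbc /eqP fc]] := implyP (f_dom (ev j)) (introT eqP fb0).
    have bc := h_cyc _ _ bK hbc; have /and3P [_ cK _] := bc.
    have ac : a != c by apply: contraNneq not_ab => ->; rewrite on_cycleC.
    by have := leq_sum2_in (fun x => val (f x)) aK cK ac; rewrite /= fa fc.
  have ab : a != ev j by rewrite eq_sym.
  have := leq_sum3_in (fun x => val (f x)) aK wK bK aw' ab wb; rewrite /= fa.
  by apply: leq_trans; rewrite -addnA (leq_add2l 2) (leq_add fw fb_pos).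
have f_pos x : x \in K -> 0 < val (f x).
  move=> xK; rewrite lt0n; apply/negP => /(implyP (f_dom x)) /existsP [u /andP [hxu fu]].
  have /and3P [_ uK _] := h_cyc _ _ xK hxu.
  by move: no2; apply/negP; rewrite negbK; apply/existsP; exists u; rewrite uK.
by apply: leq_trans n_gt3 _; rewrite -card_K -sum1_card; apply: leq_sum.
Qed.

Lemma gamma_tR_lt_del_deleted_edges : no_isolated_outside g K ->
  gamma_tR g < gamma_tR (del_edges g deleted_edges).
Proof.
move=> noi; apply: gamma_tR_lt (no_isolated_del_deleted_edges noi) _ => f tf.
pose i0 : 'I_n := Ordinal (ltn_trans (isT : 0 < 3) n_gt3).
have next_neq : ev i0 != ev (ordS i0) by rewrite (inj_eq ev_inj) eq_sym ordS_neq //; lia.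
have out_edges x y : x \notin K -> del_edges g deleted_edges x y -> (y \notin K) && g x y.
  by move=> xK; rewrite del_deleted_edges /on_cycle (negbTE xK) /= orbF andbC.
have in_edges x y : x \in K -> del_edges g deleted_edges x y -> on_cycle x y.
  by move=> xK; rewrite del_deleted_edges xK /= => /andP [].
have [f' tf' wf'] := trdf_clique_lift gK (ev_in i0) (ev_in _) next_neq out_edges tf.
apply: leq_ltn_trans (gamma_tR_le tf') _.
have split_f : weight f = \sum_(x in K) val (f x) + \sum_(x | x \notin K) val (f x).
  exact: bigID.
by rewrite wf' split_f ltn_add2r (trdf_cycle_weight in_edges tf).
Qed.

Lemma bondage_set_deleted_edges : no_isolated_outside g K -> bondage_set g deleted_edges.
Proof.
move=> noi; apply/and3P; split; first exact: deleted_edges_sub.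
  exact: no_isolated_del_deleted_edges.
exact: gamma_tR_lt_del_deleted_edges.
Qed.

End CliqueToCycle.

Theorem mainTheorem15 (T : finType) (g : rel T) (K : {set T}) :
  simple_graph g -> no_isolated g ->
  is_clique g K -> 4 <= #|K| -> no_isolated_outside g K ->
  exists m, b_tR g = Some m /\
    2 * m + #|K| * (#|K| + 1) <= 2 * (\sum_(u in K) deg g u).
Proof.
move=> [gsym girr] _ gK K_ge4 noi.
have /card_gt0P [x0 Kx0] : 0 < #|K| by apply: leq_trans K_ge4.
have ev_in : forall i, @enum_val T (mem K) i \in K := fun i => enum_valP i.
have evK : cancel enum_val (enum_rank_in Kx0) := enum_valK_in Kx0.
have rK : {in K, cancel (enum_rank_in Kx0) enum_val} := fun x xK => enum_rankK_in Kx0 xK.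
have [m bm le_m] := b_tR_le (bondage_set_deleted_edges ev_in evK rK gsym girr gK K_ge4 noi).
exists m; split => //.
have := card_deleted_arcs ev_in evK rK girr gK K_ge4.
rewrite addn1; apply: leq_trans; rewrite leq_add2r leq_mul2l /=.
exact: leq_trans le_m (leq_imset_card _ _).
Qed.
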